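(* Let $\mathcal{C}$ be a differential $\lambda$-category satisfying the Hahn–Banach Separation Theorem, and interpret the language below in $\mathcal{C}$ as described. (1) If $\Gamma_1\cup\{x:\sigma_1\}\vdash\mathbb{P}_1:\tau$ and $x\in\mathrm{lin}(\mathbb{P}_1)$, then for every $\gamma_1\in[\![\Gamma_1]\!]$ the morphism $\lambda([\![\mathbb{P}_1]\!])\gamma_1:[\![\sigma_1]\!]\to[\![\tau]\!]$ is linear, i.e. $D[\lambda([\![\mathbb{P}_1]\!])\gamma_1]=(\lambda([\![\mathbb{P}_1]\!])\gamma_1)\circ\pi_1$. (2) If $\Gamma_2\vdash\mathbb{P}_2:\sigma^{*}$, then for every $\gamma_2\in[\![\Gamma_2]\!]$ the morphism $[\![\mathbb{P}_2]\!]\gamma_2$ is linear, i.e. $D[[\![\mathbb{P}_2]\!]\gamma_2]=([\![\mathbb{P}_2]\!]\gamma_2)\circ\pi_1$.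
   Context: Differential $\lambda$-category: a category with finite products, each homset a commutative monoid $(+,0)$ with $(g+h)\circ f=g\circ f+h\circ f$, $0\circ f=0$, projections and pairings of additive maps additive, Cartesian closed with currying $\lambda(-)$ additive, and an operator $D:\mathcal{C}(A,B)\to\mathcal{C}(A\times A,B)$ satisfying the Cartesian differential axioms [CD1] $D$ additive; [CD2] $D[f]$ additive in its first argument; [CD3] $D[\mathrm{Id}]=\pi_1$, $D[\pi_1]=\pi_1\circ\pi_1$, $D[\pi_2]=\pi_2\circ\pi_1$; [CD4] $D[\langle f,g\rangle]=\langle D[f],D[g]\rangle$; [CD5] $D[g\circ f]=D[g]\circ\langle D[f],f\circ\pi_2\rangle$; [CD6] $D[D[f]]\circ\langle\langle g,0\rangle,\langle h,k\rangle\rangle=D[f]\circ\langle g,k\rangle$; [CD7] $D[D[f]]\circ\langle\langle 0,h\rangle,\langle g,k\rangle\rangle=D[D[f]]\circ\langle\langle 0,g\rangle,\langle h,k\rangle\rangle$; plus (D-curry) $D[\lambda(f)]=\lambda(D[f]\circ\langle\pi_1\times 0,\pi_2\times\mathrm{Id}\rangle)$. A morphism $f$ is linear if $D[f]=f\circ\pi_1$. $\mathcal{C}$ satisfies the Hahn–Banach Separation Theorem if $\mathbb{R}$ is an object and for any object $A$ and distinct elements $x,y$ of $A$ there is a linear $l:A\to\mathbb{R}$ with $l(x)\neq l(y)$. Syntax (over variables $x,y,v,\dots$, reals $r$, vectors $\vec r\in\mathbb{R}^n$, and a set $\mathcal{F}$ of smooth functions $f:\mathbb{R}^n\to\mathbb{R}^m$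 which are morphisms of $\mathcal{C}$): simple terms $\mathbb{S}::=x\mid\lambda x.\mathbb{S}\mid\mathbb{S}\,\mathbb{P}\mid\pi_i(\mathbb{S})\mid\langle\mathbb{S},\mathbb{S}\rangle\mid\underline{r}\mid\underline{f}(\mathbb{P})\mid\mathbf{J}f\cdot\mathbb{S}\mid(\lambda x.\mathbb{S})^{*}\mathbb{S}\mid\Omega(\lambda x.\mathbb{P})\,\mathbb{S}\mid\underline{\vec r}^{\,*}$ (Jacobian, dual map, pullback, dual constant); pullback terms $\mathbb{P}::=0\mid\mathbb{S}\mid\mathbb{S}+\mathbb{P}$. Types $\sigma::=\mathsf{R}\mid\sigma\times\sigma\mid\sigma\Rightarrow\sigma\mid\sigma^{*}$, with $\mathsf{R}^{n+1}\equiv\mathsf{R}^n\times\mathsf{R}$ and $\Omega\sigma\equiv\sigma\Rightarrow\sigma^{*}$. Linear variables: $\mathrm{lin}(x)=\{x\}$; $\mathrm{lin}(\lambda x.\mathbb{S})=\mathrm{lin}(\mathbb{S})\setminus\{x\}$; $\mathrm{lin}(\mathbb{S}\,\mathbb{P})=\mathrm{lin}(\mathbb{S})\setminus\mathrm{FV}(\mathbb{P})$; $\mathrm{lin}(\pi_i(\mathbb{S}))=\mathrm{lin}(\mathbb{S})$; $\mathrm{lin}(\langle\mathbb{S}_1,\mathbb{S}_2\rangle)=\mathrm{lin}(\mathbb{S}_1)\cap\mathrm{lin}(\mathbb{S}_2)$; $\mathrm{lin}(\mathbf{J}f\cdot\mathbb{S})=\mathrm{lin}(\mathbb{S})$; $\mathrm{lin}((\lambda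 x.\mathbb{S}_1)^*\mathbb{S}_2)=(\mathrm{lin}(\mathbb{S}_1)\setminus\mathrm{FV}(\mathbb{S}_2))\cup(\mathrm{lin}(\mathbb{S}_2)\setminus\mathrm{FV}(\mathbb{S}_1))$; $\mathrm{lin}=\emptyset$ in all other cases. Typing: $\Gamma\vdash 0:\sigma$; $\Gamma\vdash\mathbb{S}:\sigma,\Gamma\vdash\mathbb{P}:\sigma\Rightarrow\Gamma\vdash\mathbb{S}+\mathbb{P}:\sigma$; $\Gamma\cup\{x:\sigma\}\vdash x:\sigma$; standard rules for $\lambda$, application (argument a pullback term), $\pi_i$, pairs; $\Gamma\vdash\underline r:\mathsf{R}$; $\Gamma\vdash\mathbb{P}:\mathsf{R}^n\Rightarrow\Gamma\vdash\underline f(\mathbb{P}):\mathsf{R}^m$; $\Gamma\vdash\mathbb{S}:\mathsf{R}^n\Rightarrow\Gamma\vdash\mathbf{J}f\cdot\mathbb{S}:\mathsf{R}^n\Rightarrow\mathsf{R}^m$; $\Gamma\vdash\underline{\vec r}^{\,*}:(\mathsf{R}^n)^*$ for $\vec r\in\mathbb{R}^n$; if $\Gamma\cup\{x:\sigma\}\vdash\mathbb{S}_1:\tau$, $\Gamma\vdash\mathbb{S}_2:\tau^*$ and $x\in\mathrm{lin}(\mathbb{S}_1)$ then $\Gamma\vdash(\lambda x.\mathbb{S}_1)^*\mathbb{S}_2:\sigma^*$; if $\Gamma\cup\{x:\sigma\}\vdash\mathbb{P}:\tau$ and $\Gamma\vdash\mathbb{S}:\Omega\tau$ then $\Gamma\vdash\Omega(\lambda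 x.\mathbb{P})\mathbb{S}:\Omega\sigma$. Interpretation: $[\![\mathsf{R}]\!]=\mathbb{R}$, $[\![\sigma_1\times\sigma_2]\!]=[\![\sigma_1]\!]\times[\![\sigma_2]\!]$, $[\![\sigma_1\Rightarrow\sigma_2]\!]=\mathcal{C}([\![\sigma_1]\!],[\![\sigma_2]\!])$, $[\![\sigma^*]\!]=$ linear morphisms $[\![\sigma]\!]\to\mathbb{R}$; $[\![\Gamma\cup\{x:\sigma\}]\!]=[\![\Gamma]\!]\times[\![\sigma]\!]$; for $\gamma\in[\![\Gamma]\!]$: $[\![0]\!]\gamma=0$; $[\![\mathbb{S}+\mathbb{P}]\!]\gamma=[\![\mathbb{S}]\!]\gamma+[\![\mathbb{P}]\!]\gamma$; $[\![x]\!]\langle\gamma,z\rangle=z$; $[\![\lambda x.\mathbb{S}]\!]\gamma=\lambda([\![\mathbb{S}]\!])\gamma$; $[\![\mathbb{S}\,\mathbb{P}]\!]\gamma=([\![\mathbb{S}]\!]\gamma)([\![\mathbb{P}]\!]\gamma)$; projections and pairs componentwise; $[\![\underline r]\!]\gamma=r$; $[\![\underline f(\mathbb{P})]\!]\gamma=f([\![\mathbb{P}]\!]\gamma)$; $[\![\mathbf{J}f\cdot\mathbb{S}]\!]\gamma=x\mapsto D[f]\langle[\![\mathbb{S}]\!]\gamma,x\rangle$; $[\![\underline{\vec r}^{\,*}]\!]\gamma=(v_1,\dots,v_n)\mapsto\sum_i r_iv_i$; $[\![(\lambda x.\mathbb{S}_1)^*\mathbb{S}_2]\!]\gamma=v\mapsto[\![\mathbb{S}_2]\!]\gamma([\![\mathbb{S}_1]\!]\langle\gamma,v\rangle)$;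 $[\![\Omega(\lambda x.\mathbb{P})\mathbb{S}]\!]\gamma=x\mapsto v\mapsto[\![\mathbb{S}]\!]\gamma([\![\mathbb{P}]\!]\langle\gamma,x\rangle)(D[\lambda([\![\mathbb{P}]\!])\gamma]\langle v,x\rangle)$. *)

From HB Require Import structures.
From mathcomp Require Import all_boot all_algebra.
From mathcomp Require Import reals.
Set Implicit Arguments. Unset Strict Implicit. Unset Printing Implicit Defensive.
Import GRing.Theory Num.Theory.
Local Open Scope ring_scope.

Record lcat := LCat {
  Obj : Type;
  Hom : Obj -> Obj -> Type;
  idm : forall A, Hom A A;
  compm : forall X Y Z, Hom Y Z -> Hom X Y -> Hom X Z;
  unitobj : Obj;
  bang : forall A, Hom A unitobj;
  prodo : Obj -> Obj -> Obj;
  pi1 : forall A B, Hom (prodo A B) A;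
  pi2 : forall A B, Hom (prodo A B) B;
  pairm : forall X A B, Hom X A -> Hom X B -> Hom X (prodo A B);
  expo : Obj -> Obj -> Obj;
  evm : forall A B, Hom (prodo (expo A B) A) B;
  curm : forall X A B, Hom (prodo X A) B -> Hom X (expo A B);
  addm : forall A B, Hom A B -> Hom A B -> Hom A B;
  zerom : forall A B, Hom A B;
  Dop : forall A B, Hom A B -> Hom (prodo A A) B
}.
Arguments Hom {l} _ _.
Arguments idm {l} A.
Arguments compm {l X Y Z} _ _.
Arguments unitobj {l}.
Arguments bang {l} A.
Arguments prodo {l} _ _.
Arguments pi1 {l} A B.
Arguments pi2 {l} A B.
Arguments pairm {l X A B} _ _.
Arguments expo {l} _ _.
Arguments evm {l} A B.
Arguments curm {l X A B} _.
Arguments addm {l A B} _ _.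
Arguments zerom {l} A B.
Arguments Dop {l A B} _.

Section CatDefs.
Variable C : lcat.

Definition prodm (A B A' B' : Obj C) (f : Hom A A') (g : Hom B B')
  : Hom (prodo A B) (prodo A' B') :=
  pairm (compm f (pi1 A B)) (compm g (pi2 A B)).

Definition cadditive (A B : Obj C) (f : Hom A B) : Prop :=
  (forall X (g h : Hom X A), compm f (addm g h) = addm (compm f g) (compm f h)) /\
  (forall X, compm f (zerom X A) = zerom X B).

Definition dlinear (A B : Obj C) (f : Hom A B) : Prop :=
  Dop f = compm f (pi1 A A).

Definition mor_of_pt (A B : Obj C) (a : Hom unitobj (expo A B)) : Hom A B :=
  compm (evm A B) (pairm (compm a (bang A)) (idm A)).

Record dlc_axioms : Prop := {
  comp_assoc : forall (W X Y Z : Obj C) (h : Hom Y Z) (g : Hom X Y) (f : Hom W X),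
      compm h (compm g f) = compm (compm h g) f;
  comp_idl : forall (X Y : Obj C) (f : Hom X Y), compm (idm Y) f = f;
  comp_idr : forall (X Y : Obj C) (f : Hom X Y), compm f (idm X) = f;
  bang_unique : forall (A : Obj C) (f : Hom A unitobj), f = bang A;
  pi1_pair : forall (X A B : Obj C) (f : Hom X A) (g : Hom X B),
      compm (pi1 A B) (pairm f g) = f;
  pi2_pair : forall (X A B : Obj C) (f : Hom X A) (g : Hom X B),
      compm (pi2 A B) (pairm f g) = g;
  pair_eta : forall (X A B : Obj C) (h : Hom X (prodo A B)),
      pairm (compm (pi1 A B) h) (compm (pi2 A B) h) = h;
  ev_cur : forall (X A B : Obj C) (f : Hom (prodo X A) B),
      compm (evm A B) (prodm (curm f) (idm A)) = f;
  cur_eta : forall (X A B : Obj C) (h : Hom X (expo A B)),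
      curm (compm (evm A B) (prodm h (idm A))) = h;
  add_assoc : forall (A B : Obj C) (f g h : Hom A B),
      addm f (addm g h) = addm (addm f g) h;
  add_comm : forall (A B : Obj C) (f g : Hom A B), addm f g = addm g f;
  add_0l : forall (A B : Obj C) (f : Hom A B), addm (zerom A B) f = f;
  add_comp : forall (X A B : Obj C) (g h : Hom A B) (f : Hom X A),
      compm (addm g h) f = addm (compm g f) (compm h f);
  zero_comp : forall (X A B : Obj C) (f : Hom X A), compm (zerom A B) f = zerom X B;
  pi1_additive : forall A B : Obj C, cadditive (pi1 A B);
  pi2_additive : forall A B : Obj C, cadditive (pi2 A B);
  pair_additive : forall (X A B : Obj C) (f : Hom X A) (g : Hom X B),
      cadditive f -> cadditive g -> cadditive (pairm f g);
  cur_add : forall (X A B : Obj C) (f g : Hom (prodo X A) B),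
      curm (addm f g) = addm (curm f) (curm g);
  cur_zero : forall X A B : Obj C, curm (zerom (prodo X A) B) = zerom X (expo A B);
  CD1_add : forall (A B : Obj C) (f g : Hom A B), Dop (addm f g) = addm (Dop f) (Dop g);
  CD1_zero : forall A B : Obj C, Dop (zerom A B) = zerom (prodo A A) B;
  CD2_add : forall (A B X : Obj C) (f : Hom A B) (g h k : Hom X A),
      compm (Dop f) (pairm (addm g h) k)
      = addm (compm (Dop f) (pairm g k)) (compm (Dop f) (pairm h k));
  CD2_zero : forall (A B X : Obj C) (f : Hom A B) (k : Hom X A),
      compm (Dop f) (pairm (zerom X A) k) = zerom X B;
  CD3_id : forall A : Obj C, Dop (idm A) = pi1 A A;
  CD3_pi1 : forall A B : Obj C,
      Dop (pi1 A B) = compm (pi1 A B) (pi1 (prodo A B) (prodo A B));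
  CD3_pi2 : forall A B : Obj C,
      Dop (pi2 A B) = compm (pi2 A B) (pi1 (prodo A B) (prodo A B));
  CD4 : forall (X A B : Obj C) (f : Hom X A) (g : Hom X B),
      Dop (pairm f g) = pairm (Dop f) (Dop g);
  CD5 : forall (A B E : Obj C) (f : Hom A B) (g : Hom B E),
      Dop (compm g f) = compm (Dop g) (pairm (Dop f) (compm f (pi2 A A)));
  CD6 : forall (A B X : Obj C) (f : Hom A B) (g h k : Hom X A),
      compm (Dop (Dop f)) (pairm (pairm g (zerom X A)) (pairm h k))
      = compm (Dop f) (pairm g k);
  CD7 : forall (A B X : Obj C) (f : Hom A B) (g h k : Hom X A),
      compm (Dop (Dop f)) (pairm (pairm (zerom X A) h) (pairm g k))
      = compm (Dop (Dop f)) (pairm (pairm (zerom X A) g) (pairm h k));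
  D_curry : forall (X A B : Obj C) (f : Hom (prodo X A) B),
      Dop (curm f)
      = curm (compm (Dop f) (pairm (prodm (pi1 X X) (zerom A A))
                                   (prodm (pi2 X X) (idm A))))
}.

End CatDefs.

Inductive ty := TR | TProd of ty & ty | TArr of ty & ty | TDual of ty.

Definition TOmega (s : ty) : ty := TArr s (TDual s).

(* Rpow k = R^(k+1), with R^(n+1) = R^n x R and R^1 = R *)
Fixpoint Rpow (k : nat) : ty := if k is k'.+1 then TProd (Rpow k') TR else TR.

Section Syntax.
Variables (R : Type) (Fsym : Type).
(* each symbol f : R^(fin f + 1) -> R^(fout f + 1) *)
Variables (fin fout : Fsym -> nat).

Inductive sterm :=
  | SVar of nat
  | SLam of nat & sterm
  | SApp of sterm & pterm
  | SPi1 of sterm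
  | SPi2 of sterm
  | SPair of sterm & sterm
  | SConst of R
  | SFun of Fsym & pterm
  | SJac of Fsym & sterm
  | SPull of nat & sterm & sterm        (* (lambda x. S1)^* S2 *)
  | SOmega of nat & pterm & sterm       (* Omega (lambda x. P) S *)
  | SDualC of seq R
with pterm :=
  | PZero
  | PS of sterm
  | PAdd of sterm & pterm.

Fixpoint fv_s (s : sterm) : nat -> bool :=
  match s with
  | SVar y => fun z => z == y
  | SLam x t => fun z => (z != x) && fv_s t z
  | SApp t p => fun z => fv_s t z || fv_p p z
  | SPi1 t => fv_s t
  | SPi2 t => fv_s t
  | SPair t u => fun z => fv_s t z || fv_s u z
  | SConst _ => fun _ => false
  | SFun _ p => fv_p p
  | SJac _ t => fv_s t
  | SPull x t u => fun z => ((z != x) && fv_s t z) || fv_s u z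
  | SOmega x p t => fun z => ((z != x) && fv_p p z) || fv_s t z
  | SDualC _ => fun _ => false
  end
with fv_p (p : pterm) : nat -> bool :=
  match p with
  | PZero => fun _ => false
  | PS t => fv_s t
  | PAdd t q => fun z => fv_s t z || fv_p q z
  end.

Fixpoint lin_s (s : sterm) : nat -> bool :=
  match s with
  | SVar y => fun z => z == y
  | SLam x t => fun z => (z != x) && lin_s t z
  | SApp t p => fun z => lin_s t z && ~~ fv_p p z
  | SPi1 t => lin_s t
  | SPi2 t => lin_s t
  | SPair t u => fun z => lin_s t z && lin_s u z
  | SJac _ t => lin_s t
  | SPull x t u => fun z =>
      ((z != x) && lin_s t z && ~~ fv_s u z) || (lin_s u z && ~~ fv_s t z)
  | _ => fun _ => false
  end.

Definition lin_p (p : pterm) : nat -> bool :=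
  match p with PS t => lin_s t | _ => fun _ => false end.

(* contexts: (x, s) :: G  stands for  G U {x : s} *)
Definition ctx := seq (nat * ty).

Inductive styped : ctx -> sterm -> ty -> Type :=
  | TyVarHere G x s : styped ((x, s) :: G) (SVar x) s
  | TyVarThere G x y s t :
      x != y -> styped G (SVar x) s -> styped ((y, t) :: G) (SVar x) s
  | TyLam G x s t b : styped ((x, s) :: G) b t -> styped G (SLam x b) (TArr s t)
  | TyApp G f p s t :
      styped G f (TArr s t) -> ptyped G p s -> styped G (SApp f p) t
  | TyPi1 G u s t : styped G u (TProd s t) -> styped G (SPi1 u) s
  | TyPi2 G u s t : styped G u (TProd s t) -> styped G (SPi2 u) t
  | TyPair G u v s t :
      styped G u s -> styped G v t -> styped G (SPair u v) (TProd s t)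
  | TyConst G r : styped G (SConst r) TR
  | TyFun G f p : ptyped G p (Rpow (fin f)) -> styped G (SFun f p) (Rpow (fout f))
  | TyJac G f u : styped G u (Rpow (fin f)) ->
      styped G (SJac f u) (TArr (Rpow (fin f)) (Rpow (fout f)))
  | TyDual G k r : size r = k.+1 -> styped G (SDualC r) (TDual (Rpow k))
  | TyPull G x u v s t :
      styped ((x, s) :: G) u t -> styped G v (TDual t) -> lin_s u x ->
      styped G (SPull x u v) (TDual s)
  | TyOmega G x p u s t :
      ptyped ((x, s) :: G) p t -> styped G u (TOmega t) ->
      styped G (SOmega x p u) (TOmega s)
with ptyped : ctx -> pterm -> ty -> Type :=
  | TyZero G s : ptyped G PZero s
  | TyPS G u s : styped G u s -> ptyped G (PS u) s
  | TyAdd G u p s : styped G u s -> ptyped G p s -> ptyped G (PAdd u p) s.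

End Syntax.

Fixpoint tyI (C : lcat) (Robj : Obj C) (t : ty) : Obj C :=
  match t with
  | TR => Robj
  | TProd s u => prodo (tyI Robj s) (tyI Robj u)
  | TArr s u => expo (tyI Robj s) (tyI Robj u)
  | TDual s => expo (tyI Robj s) Robj   (* linearity enforced by [good] *)
  end.

Record realstr (R : realType) (C : lcat) (Fsym : Type) (fin fout : Fsym -> nat) := {
  Robj : Obj C;
  rpt : R -> Hom (@unitobj C) Robj;
  dualc : forall k : nat, seq R -> Hom (tyI Robj (Rpow k)) Robj;
                                         (* v |-> sum_i r_i v_i *)
  fmor : forall f : Fsym, Hom (tyI Robj (Rpow (fin f))) (tyI Robj (Rpow (fout f)))
}.
Arguments Robj {R C Fsym fin fout} r.
Arguments rpt {R C Fsym fin fout} r _.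
Arguments dualc {R C Fsym fin fout} r k _.
Arguments fmor {R C Fsym fin fout} r f.

Section Interp.
Variables (R : realType) (C : lcat) (Fsym : Type) (fin fout : Fsym -> nat).
Variable RS : realstr R C fin fout.

Local Notation tI := (tyI (Robj RS)).

Fixpoint ctxI (G : ctx) : Obj C :=
  match G with
  | [::] => unitobj
  | xs :: G' => prodo (ctxI G') (tI xs.2)
  end.

Fixpoint vecpt (k : nat) (v : nat -> R) : Hom (@unitobj C) (tI (Rpow k)) :=
  match k return Hom unitobj (tI (Rpow k)) with
  | 0 => rpt RS (v 0%N)
  | k'.+1 => pairm (vecpt k' v) (rpt RS (v k'.+1))
  end.

Fixpoint sI G s t (d : styped fin fout G s t) {struct d} : Hom (ctxI G) (tI t) :=
  match d in styped _ _ G s t return Hom (ctxI G) (tI t) with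
  | TyVarHere G x s => pi2 _ _
  | TyVarThere G x y s t _ d' => compm (sI d') (pi1 _ _)
  | TyLam G x s t b db => curm (sI db)
  | TyApp G f p s t df dp => compm (evm _ _) (pairm (sI df) (pI dp))
  | TyPi1 G u s t du => compm (pi1 _ _) (sI du)
  | TyPi2 G u s t du => compm (pi2 _ _) (sI du)
  | TyPair G u v s t du dv => pairm (sI du) (sI dv)
  | TyConst G r => compm (rpt RS r) (bang _)
  | TyFun G f p dp => compm (fmor RS f) (pI dp)
  | TyJac G f u du =>
      curm (compm (Dop (fmor RS f)) (pairm (compm (sI du) (pi1 _ _)) (pi2 _ _)))
  | TyDual G k r _ => curm (compm (dualc RS k r) (pi2 _ _))
  | TyPull G x u v s t du dv _ =>
      (* gamma |-> (v |-> [[S2]]gamma ([[S1]]<gamma, v>)) *)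
      curm (compm (evm _ _) (pairm (compm (sI dv) (pi1 _ _)) (sI du)))
  | TyOmega G x p u s t dp du =>
      (* gamma |-> x |-> v |->
           [[S]]gamma([[P]]<gamma,x>)(D[lambda([[P]])gamma]<v,x>),
         where D[lambda([[P]])gamma]<v,x> = D[[[P]]] << 0, v >, < gamma, x >> *)
      let q1 := pi1 (prodo (ctxI G) (tI s)) (tI s) in
      let q2 := pi2 (prodo (ctxI G) (tI s)) (tI s) in
      let t1 := compm (evm _ _)
                  (pairm (compm (sI du) (compm (pi1 _ _) q1)) (compm (pI dp) q1)) in
      let t2 := compm (Dop (pI dp)) (pairm (pairm (zerom _ (ctxI G)) q2) q1) in
      curm (curm (compm (evm _ _) (pairm t1 t2)))
  end
with pI G p t (d : ptyped fin fout G p t) {struct d} : Hom (ctxI G) (tI t) :=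
  match d in ptyped _ _ G p t return Hom (ctxI G) (tI t) with
  | TyZero G s => zerom _ _
  | TyPS G u s du => sI du
  | TyAdd G u p s du dp => addm (sI du) (pI dp)
  end.

(* semantic membership of a global element in [[t]]:
   [[s^*]] consists of the LINEAR morphisms [[s]] -> R *)
Fixpoint good (t : ty) : Hom (@unitobj C) (tI t) -> Prop :=
  match t return Hom unitobj (tI t) -> Prop with
  | TR => fun _ => True
  | TProd s u => fun a => @good s (compm (pi1 _ _) a) /\ @good u (compm (pi2 _ _) a)
  | TArr s u => fun a => forall b, @good s b -> @good u (compm (evm _ _) (pairm a b))
  | TDual s => fun a => dlinear (mor_of_pt a)
  end.

Fixpoint ctx_good (G : ctx) : Hom (@unitobj C) (ctxI G) -> Prop :=
  match G return Hom unitobj (ctxI G) -> Prop with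
  | [::] => fun _ => True
  | xs :: G' => fun g => @ctx_good G' (compm (pi1 _ _) g) /\ @good xs.2 (compm (pi2 _ _) g)
  end.

Definition realstr_ok : Prop :=
  bijective (rpt RS) /\
  (forall a b : R, rpt RS (a + b) = addm (rpt RS a) (rpt RS b)) /\
  rpt RS 0 = zerom _ _ /\
  (forall (k : nat) (r : seq R), size r = k.+1 -> dlinear (dualc RS k r)) /\
  (forall (k : nat) (r : seq R) (v : nat -> R), size r = k.+1 ->
      compm (dualc RS k r) (vecpt k v) = rpt RS (\sum_(i < k.+1) r`_i * v i)).

Definition hahn_banach : Prop :=
  forall (A : Obj C) (x y : Hom (@unitobj C) A), x <> y ->
    exists l : Hom A (Robj RS), dlinear l /\ compm l x <> compm l y.

End Interp.

Arguments ctxI {R C Fsym fin fout} RS G.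
Arguments vecpt {R C Fsym fin fout} RS k v.
Arguments sI {R C Fsym fin fout} RS {G s t} d.
Arguments pI {R C Fsym fin fout} RS {G p t} d.
Arguments good {R C Fsym fin fout} RS t _.
Arguments ctx_good {R C Fsym fin fout} RS G _.
Arguments realstr_ok {R C Fsym fin fout} RS.
Arguments hahn_banach {R C Fsym fin fout} RS.

From Pilot Require Import Defs.
From mathcomp Require Import all_boot reals.
Import Defs.

Set Implicit Arguments.
Unset Strict Implicit.
Unset Printing Implicit Defensive.

(* Both parts are proved by induction on typing derivations, generalised from the last
   variable to an arbitrary slot of the context.  For (1), the interpretation of a term is
   linear in every visible slot whose variable is linear in the term, and constant in every
   slot whose variable is not free in it; CD4-CD6 and D-curry make these two properties
   stable under each term former.  For (2), well-typed terms send good environments to good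
   values, a value of type sigma* being good when it is a linear morphism: the pullback
   (lambda x. S1)^* S2 composes the linear map [[S2]]gamma with x |-> [[S1]]<gamma, x>,
   linear by (1), and Omega (lambda x. P) S composes a linear map with the partial
   derivative of [[P]] in x, which is linear by CD6. *)

Scheme styped_mut_ind := Induction for styped Sort Prop
  with ptyped_mut_ind := Induction for ptyped Sort Prop.

Section DifferentialLambdaCategory.
Variable C : lcat.
Hypothesis ax : dlc_axioms C.
Implicit Types W X Y Z A B : Obj C.

Lemma compmA W X Y Z (h : Hom Y Z) (g : Hom X Y) (f : Hom W X) :
  compm (compm h g) f = compm h (compm g f).
Proof. by rewrite (comp_assoc ax). Qed.

Lemma pairm_comp Y X A B (f : Hom X A) (g : Hom X B) (h : Hom Y X) :
  compm (pairm f g) h = pairm (compm f h) (compm g h).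
Proof. by rewrite -[LHS](pair_eta ax) -!compmA (pi1_pair ax) (pi2_pair ax). Qed.

Lemma pi1_pairm_comp Y X A B (f : Hom X A) (g : Hom X B) (h : Hom Y X) :
  compm (pi1 A B) (compm (pairm f g) h) = compm f h.
Proof. by rewrite -compmA (pi1_pair ax). Qed.

Lemma pi2_pairm_comp Y X A B (f : Hom X A) (g : Hom X B) (h : Hom Y X) :
  compm (pi2 A B) (compm (pairm f g) h) = compm g h.
Proof. by rewrite -compmA (pi2_pair ax). Qed.

Lemma bang_comp X Y (f : Hom X Y) : compm (bang Y) f = bang X.
Proof. exact: (bang_unique ax). Qed.

Lemma pi1_zero X A B : compm (pi1 A B) (zerom X _) = zerom X A.
Proof. exact: (pi1_additive ax A B).2. Qed.

Lemma pi2_zero X A B : compm (pi2 A B) (zerom X _) = zerom X B.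
Proof. exact: (pi2_additive ax A B).2. Qed.

Lemma pairm_zero X A B : pairm (zerom X A) (zerom X B) = zerom X (prodo A B).
Proof. by rewrite -[RHS](pair_eta ax) pi1_zero pi2_zero. Qed.

Lemma prodm_pairm Y X A B A' (f : Hom X B) (g : Hom A A') (u : Hom Y X) (c : Hom Y A) :
  compm (prodm f g) (pairm u c) = pairm (compm f u) (compm g c).
Proof. by rewrite /prodm pairm_comp !compmA (pi1_pair ax) (pi2_pair ax). Qed.

Lemma evm_curm Y X A B (k : Hom (prodo X A) B) (u : Hom Y X) (c : Hom Y A) :
  compm (evm A B) (pairm (compm (curm k) u) c) = compm k (pairm u c).
Proof.
have -> : pairm (compm (curm k) u) c = compm (prodm (curm k) (idm A)) (pairm u c).
  by rewrite prodm_pairm (comp_idl ax).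
by rewrite -compmA (ev_cur ax).
Qed.

Lemma evm_curm_id X A B (k : Hom (prodo X A) B) (c : Hom X A) :
  compm (evm A B) (pairm (curm k) c) = compm k (pairm (idm X) c).
Proof. by rewrite -[RHS]evm_curm (comp_idr ax). Qed.

Lemma curm_comp Y X A B (k : Hom (prodo X A) B) (h : Hom Y X) :
  compm (curm k) h = curm (compm k (pairm (compm h (pi1 Y A)) (pi2 Y A))).
Proof. by rewrite -[LHS](cur_eta ax) /prodm (comp_idl ax) compmA evm_curm. Qed.

Lemma evm_addl X A B (f g : Hom X (expo A B)) (c : Hom X A) :
  compm (evm A B) (pairm (addm f g) c)
  = addm (compm (evm A B) (pairm f c)) (compm (evm A B) (pairm g c)).
Proof.
rewrite -[f](cur_eta ax) -[g](cur_eta ax) -(cur_add ax) !evm_curm_id (add_comp ax).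
by rewrite !compmA !prodm_pairm !(comp_idl ax) !(comp_idr ax).
Qed.

Lemma evm_zerol X A B (c : Hom X A) :
  compm (evm A B) (pairm (zerom X (expo A B)) c) = zerom X B.
Proof. by rewrite -(cur_zero ax) evm_curm_id (zero_comp ax). Qed.

Ltac cat_simpl := repeat first
  [ rewrite compmA | rewrite (pi1_pair ax) | rewrite (pi2_pair ax)
  | rewrite pi1_pairm_comp | rewrite pi2_pairm_comp | rewrite pairm_comp
  | rewrite (comp_idl ax) | rewrite (comp_idr ax) | rewrite (zero_comp ax)
  | rewrite pi1_zero | rewrite pi2_zero | rewrite bang_comp | rewrite evm_curm
  | rewrite /prodm ].

Lemma Dop_dlinear_comp X A B (g : Hom A B) (f : Hom X A) :
  dlinear g -> Dop (compm g f) = compm g (Dop f).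
Proof. by move=> lin_g; rewrite (CD5 ax) lin_g compmA (pi1_pair ax). Qed.

Lemma Dop_pi1_comp X A B (f : Hom X (prodo A B)) :
  Dop (compm (pi1 A B) f) = compm (pi1 A B) (Dop f).
Proof. exact/Dop_dlinear_comp/(CD3_pi1 ax). Qed.

Lemma Dop_pi2_comp X A B (f : Hom X (prodo A B)) :
  Dop (compm (pi2 A B) f) = compm (pi2 A B) (Dop f).
Proof. exact/Dop_dlinear_comp/(CD3_pi2 ax). Qed.

Lemma Dop_const X A (c : Hom unitobj A) : Dop (compm c (bang X)) = zerom _ A.
Proof.
rewrite (CD5 ax) (bang_unique ax (Dop (bang X))).
by rewrite -[bang _](bang_unique ax (zerom _ _)) (CD2_zero ax).
Qed.

Lemma dlinear_comp X A B (g : Hom A B) (f : Hom X A) :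
  dlinear g -> dlinear f -> dlinear (compm g f).
Proof. by move=> lin_g lin_f; rewrite /dlinear Dop_dlinear_comp // lin_f compmA. Qed.

Lemma dlinear_add A B (f g : Hom A B) : dlinear f -> dlinear g -> dlinear (addm f g).
Proof. by move=> lin_f lin_g; rewrite /dlinear (CD1_add ax) lin_f lin_g (add_comp ax). Qed.

Lemma dlinear_zero A B : dlinear (zerom A B).
Proof. by rewrite /dlinear (CD1_zero ax) (zero_comp ax). Qed.

Lemma Dop_curm_evm X A B (h : Hom (prodo X A) B) Y (a g : Hom Y X) (c : Hom Y A) :
  compm (Dop h) (pairm (pairm a (zerom Y A)) (pairm g c))
  = compm (evm A B) (pairm (compm (Dop (curm h)) (pairm a g)) c).
Proof. by rewrite (D_curry ax) evm_curm; cat_simpl. Qed.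

(* By CD6, differentiating D[P] in its linear argument gives back D[P]. *)
Lemma dlinear_partial_Dop X A B (P : Hom (prodo X A) B) (c : Hom unitobj (prodo X A)) :
  dlinear (compm (Dop P) (pairm (pairm (zerom A X) (idm A)) (compm c (bang A)))).
Proof.
rewrite /dlinear (CD5 ax) !(CD4 ax) (CD1_zero ax) (CD3_id ax) Dop_const.
by cat_simpl; rewrite (CD6 ax); cat_simpl.
Qed.

Lemma mor_of_pt_curm X A B (F : Hom (prodo X A) B) (g : Hom unitobj X) :
  mor_of_pt (compm (curm F) g) = compm F (pairm (compm g (bang A)) (idm A)).
Proof. by rewrite /mor_of_pt compmA evm_curm. Qed.

Lemma mor_of_pt_add A B (a b : Hom unitobj (expo A B)) :
  mor_of_pt (addm a b) = addm (mor_of_pt a) (mor_of_pt b).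
Proof. by rewrite /mor_of_pt (add_comp ax) evm_addl. Qed.

Lemma mor_of_pt_zero A B : mor_of_pt (zerom unitobj (expo A B)) = zerom A B.
Proof. by rewrite /mor_of_pt (zero_comp ax) evm_zerol. Qed.

Lemma mor_of_pt_pullback X A B O (T : Hom (prodo X A) B) (V : Hom X (expo B O))
    (g : Hom unitobj X) :
  mor_of_pt (compm (curm (compm (evm B O) (pairm (compm V (pi1 X A)) T))) g)
  = compm (mor_of_pt (compm V g)) (compm T (pairm (compm g (bang A)) (idm A))).
Proof. by rewrite /mor_of_pt; cat_simpl. Qed.

Definition omega_mor X A B O (P : Hom (prodo X A) B) (U : Hom X (expo B (expo B O)))
    : Hom X (expo A (expo A O)) :=
  let q1 := pi1 (prodo X A) A in
  let q2 := pi2 (prodo X A) A in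
  let t1 := compm (evm _ _) (pairm (compm U (compm (pi1 _ _) q1)) (compm P q1)) in
  let t2 := compm (Dop P) (pairm (pairm (zerom _ X) q2) q1) in
  curm (curm (compm (evm _ _) (pairm t1 t2))).

Lemma mor_of_pt_omega_mor X A B O (P : Hom (prodo X A) B)
    (U : Hom X (expo B (expo B O))) (g : Hom unitobj X) (b : Hom unitobj A) :
  mor_of_pt (compm (evm _ _) (pairm (compm (omega_mor P U) g) b))
  = compm (mor_of_pt (compm (evm _ _) (pairm (compm U g) (compm P (pairm g b)))))
      (compm (Dop P) (pairm (pairm (zerom A X) (idm A)) (compm (pairm g b) (bang A)))).
Proof. by rewrite /mor_of_pt /omega_mor; cat_simpl. Qed.

Section Interpretation.
Variables (R : realType) (Fsym : Type) (fin fout : Fsym -> nat).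
Variable RS : realstr R C fin fout.
Local Notation tI := (tyI (Robj RS)).
Local Notation cI := (ctxI RS).
Implicit Types (G : ctx) (n : nat).

(* Slot [n] of a context is the [n]-th most recently bound variable. *)
Definition slot_ty G n : ty := (nth (0%N, TR) G n).2.

Fixpoint set_slot G : forall n X, Hom X (cI G) -> Hom X (tI (slot_ty G n)) -> Hom X (cI G) :=
  match G return forall n X, Hom X (cI G) -> Hom X (tI (slot_ty G n)) -> Hom X (cI G) with
  | [::] => fun n X g _ => g
  | xs :: G' => fun n X =>
      match n return Hom X (cI (xs :: G')) -> Hom X (tI (slot_ty (xs :: G') n)) ->
                     Hom X (cI (xs :: G')) with
      | 0 => fun g v => pairm (compm (pi1 _ _) g) v
      | m.+1 => fun g v => pairm (@set_slot G' m X (compm (pi1 _ _) g) v) (compm (pi2 _ _) g)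
      end
  end.

Fixpoint get_slot G : forall n X, Hom X (cI G) -> Hom X (tI (slot_ty G n)) :=
  match G return forall n X, Hom X (cI G) -> Hom X (tI (slot_ty G n)) with
  | [::] => fun n X _ => zerom _ _
  | xs :: G' => fun n X =>
      match n return Hom X (cI (xs :: G')) -> Hom X (tI (slot_ty (xs :: G') n)) with
      | 0 => fun g => compm (pi2 _ _) g
      | m.+1 => fun g => @get_slot G' m X (compm (pi1 _ _) g)
      end
  end.

Arguments set_slot {G} n {X} g v.
Arguments get_slot {G} n {X} g.

Lemma set_slot0 xs G X (g : Hom X (cI (xs :: G))) (v : Hom X (tI xs.2)) :
  set_slot 0 g v = pairm (compm (pi1 _ _) g) v.
Proof. by []. Qed.

Lemma set_slotS xs G n X (g : Hom X (cI (xs :: G))) v :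
  set_slot n.+1 g v = pairm (set_slot n (compm (pi1 _ _) g) v) (compm (pi2 _ _) g).
Proof. by []. Qed.

Lemma set_slot_comp G n X Y (g : Hom X (cI G)) v (f : Hom Y X) :
  compm (set_slot n g v) f = set_slot n (compm g f) (compm v f).
Proof.
elim: G n X Y g v f => [|xs G IH] [|n] X Y g v f //=; rewrite pairm_comp compmA //.
by rewrite IH compmA.
Qed.

Lemma Dop_set_slot G n X (g : Hom X (cI G)) v :
  Dop (set_slot n g v) = set_slot n (Dop g) (Dop v).
Proof.
elim: G n X g v => [|xs G IH] [|n] X g v //=.
  by rewrite (CD4 ax) Dop_pi1_comp.
by rewrite (CD4 ax) IH Dop_pi1_comp Dop_pi2_comp.
Qed.

Lemma set_get_slot G n X (g : Hom X (cI G)) : set_slot n g (get_slot n g) = g.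
Proof.
elim: G n X g => [|xs G IH] [|n] X g //=; first exact: (pair_eta ax).
by rewrite IH (pair_eta ax).
Qed.

Lemma set_slot_zero G n X : set_slot n (zerom X (cI G)) (zerom X _) = zerom X _.
Proof.
elim: G n X => [|xs G IH] [|n] X //=; first by rewrite pi1_zero pairm_zero.
by rewrite pi1_zero pi2_zero IH pairm_zero.
Qed.

Ltac slot_simpl := repeat first
  [ progress cat_simpl | rewrite set_slot_comp | rewrite set_slotS | rewrite set_slot0 ].

Definition linear_in_slot G n B (F : Hom (cI G) B) : Prop :=
  forall X (g : Hom X (cI G)) v,
    compm (Dop F) (pairm (set_slot n (zerom X _) v) g) = compm F (set_slot n g v).

Definition constant_in_slot G n B (F : Hom (cI G) B) : Prop :=
  forall X (g : Hom X (cI G)) v, compm F (set_slot n g v) = compm F g.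

Arguments linear_in_slot {G} n {B} F.
Arguments constant_in_slot {G} n {B} F.

Lemma Dop_constant_in_slot G n B (F : Hom (cI G) B) : constant_in_slot n F ->
  forall X (g : Hom X (cI G)) v,
    compm (Dop F) (pairm (set_slot n (zerom X _) v) g) = zerom X B.
Proof.
move=> cst_F X g v.
have := congr1 Dop (cst_F _ (pi1 _ _) (pi2 _ _)).
move=> /(congr1 (fun k => compm k (pairm (pairm (zerom X _) v) (pairm g (get_slot n g))))).
rewrite !(CD5 ax) Dop_set_slot (CD3_pi1 ax) (CD3_pi2 ax).
by slot_simpl; rewrite set_get_slot (CD2_zero ax).
Qed.

Lemma constant_in_slot_comp G n A B (h : Hom A B) (F : Hom (cI G) A) :
  constant_in_slot n F -> constant_in_slot n (compm h F).
Proof. by move=> cst_F X g v; rewrite !compmA cst_F. Qed.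

Lemma constant_in_slot_pair G n A B (F1 : Hom (cI G) A) (F2 : Hom (cI G) B) :
  constant_in_slot n F1 -> constant_in_slot n F2 -> constant_in_slot n (pairm F1 F2).
Proof. by move=> cst1 cst2 X g v; rewrite !pairm_comp cst1 cst2. Qed.

Lemma constant_in_slot_const G n A (c : Hom unitobj A) :
  constant_in_slot n (compm c (bang (cI G))).
Proof. by move=> X g v; rewrite !compmA !bang_comp. Qed.

Lemma constant_in_slot_zero G n A : constant_in_slot n (zerom (cI G) A).
Proof. by move=> X g v; rewrite !(zero_comp ax). Qed.

Lemma constant_in_slot_add G n A (F1 F2 : Hom (cI G) A) :
  constant_in_slot n F1 -> constant_in_slot n F2 -> constant_in_slot n (addm F1 F2).
Proof. by move=> cst1 cst2 X g v; rewrite !(add_comp ax) cst1 cst2. Qed.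

Lemma constant_in_slot_weaken xs G n A (F : Hom (cI G) A) :
  constant_in_slot n F -> constant_in_slot (G := xs :: G) n.+1 (compm F (pi1 _ _)).
Proof. by move=> cst_F X g v; rewrite set_slotS !compmA (pi1_pair ax) cst_F. Qed.

Lemma constant_in_top_slot_weaken xs G A (F : Hom (cI G) A) :
  constant_in_slot (G := xs :: G) 0 (compm F (pi1 _ _)).
Proof. by move=> X g v; rewrite set_slot0 !compmA (pi1_pair ax). Qed.

Lemma constant_in_slot_top_var xs G n :
  constant_in_slot (G := xs :: G) n.+1 (pi2 (cI G) (tI xs.2)).
Proof. by move=> X g v; rewrite set_slotS (pi2_pair ax). Qed.

Lemma constant_in_slot_curm xs G n B (K : Hom (cI (xs :: G)) B) :
  constant_in_slot n.+1 K -> constant_in_slot n (curm K).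
Proof.
move=> cst_K X g v; rewrite !curm_comp; congr curm.
have := cst_K _ (pairm (compm g (pi1 _ _)) (pi2 _ _)) (compm v (pi1 _ _)).
by slot_simpl.
Qed.

Lemma Dop_constant_in_slot_partial xs G n B (P : Hom (cI (xs :: G)) B) :
  constant_in_slot n.+1 P ->
  forall X (k : Hom X (cI G)) (w c : Hom X (tI xs.2)) v,
    compm (Dop P) (pairm (pairm (zerom X _) c) (pairm (set_slot n k v) w))
    = compm (Dop P) (pairm (pairm (zerom X _) c) (pairm k w)).
Proof.
move=> cst_P X k w c v.
have := cst_P _ (pairm (compm k (pi1 _ _)) (pi2 X (tI xs.2))) (compm v (pi1 _ _)).
rewrite set_slotS; slot_simpl.
move=> /(congr1 Dop); rewrite !(CD5 ax) !(CD4 ax) Dop_set_slot !(CD5 ax).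
rewrite (CD3_pi1 ax) (CD3_pi2 ax).
move=> /(congr1 (fun q => compm q (pairm (pairm (zerom _ X) c) (pairm (idm X) w)))).
by slot_simpl; rewrite !(CD2_zero ax) set_slot_zero.
Qed.

Lemma constant_in_slot_omega_mor xs G n B O (P : Hom (cI (xs :: G)) B)
    (U : Hom (cI G) (expo B (expo B O))) :
  constant_in_slot n U -> constant_in_slot n.+1 P -> constant_in_slot n (omega_mor P U).
Proof.
move=> cst_U cst_P; rewrite /omega_mor.
apply: (constant_in_slot_curm (xs := xs)).
apply: (constant_in_slot_curm (xs := (0%N, xs.2)) (G := xs :: G)).
apply: constant_in_slot_comp; apply: constant_in_slot_pair.
  apply: constant_in_slot_comp; apply: constant_in_slot_pair.
    by rewrite -compmA; do 2 apply: constant_in_slot_weaken.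
  exact: constant_in_slot_weaken.
move=> X g v; slot_simpl.
by rewrite Dop_constant_in_slot_partial // (pair_eta ax).
Qed.

Lemma linear_in_slot_weaken xs G n A (F : Hom (cI G) A) :
  linear_in_slot n F -> linear_in_slot (G := xs :: G) n.+1 (compm F (pi1 _ _)).
Proof.
by move=> lin_F X g v; rewrite (CD5 ax) (CD3_pi1 ax) set_slotS; slot_simpl; rewrite lin_F.
Qed.

Lemma linear_in_top_slot_var xs G : linear_in_slot (G := xs :: G) 0 (pi2 (cI G) (tI xs.2)).
Proof. by move=> X g v; rewrite (CD3_pi2 ax) set_slot0; slot_simpl. Qed.

Lemma linear_in_slot_pi1 G n A B (F : Hom (cI G) (prodo A B)) :
  linear_in_slot n F -> linear_in_slot n (compm (pi1 A B) F).
Proof. by move=> lin_F X g v; rewrite Dop_pi1_comp !compmA lin_F. Qed.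

Lemma linear_in_slot_pi2 G n A B (F : Hom (cI G) (prodo A B)) :
  linear_in_slot n F -> linear_in_slot n (compm (pi2 A B) F).
Proof. by move=> lin_F X g v; rewrite Dop_pi2_comp !compmA lin_F. Qed.

Lemma linear_in_slot_pair G n A B (F1 : Hom (cI G) A) (F2 : Hom (cI G) B) :
  linear_in_slot n F1 -> linear_in_slot n F2 -> linear_in_slot n (pairm F1 F2).
Proof. by move=> lin1 lin2 X g v; rewrite (CD4 ax) !pairm_comp lin1 lin2. Qed.

Lemma linear_in_slot_curm xs G n B (K : Hom (cI (xs :: G)) B) :
  linear_in_slot n.+1 K -> linear_in_slot n (curm K).
Proof.
move=> lin_K X g v; rewrite (D_curry ax) !curm_comp; congr curm.
have := lin_K _ (pairm (compm g (pi1 _ _)) (pi2 _ _)) (compm v (pi1 X (tI xs.2))).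
by slot_simpl => <-; slot_simpl.
Qed.

Lemma linear_in_slot_app G n A B (F : Hom (cI G) (expo A B)) (P : Hom (cI G) A) :
  linear_in_slot n F -> constant_in_slot n P ->
  linear_in_slot n (compm (evm A B) (pairm F P)).
Proof.
move=> lin_F cst_P X g v.
set h := compm (evm A B) (prodm F (idm A)).
have eF : F = curm h by rewrite /h (cur_eta ax).
have -> : compm (evm A B) (pairm F P) = compm h (pairm (idm _) P).
  by rewrite /h compmA prodm_pairm (comp_idl ax) (comp_idr ax).
rewrite (CD5 ax) (CD4 ax) (CD3_id ax); slot_simpl.
by rewrite Dop_constant_in_slot // Dop_curm_evm -eF lin_F cst_P.
Qed.

Lemma linear_in_slot_jacobian G n A B (f : Hom A B) (F : Hom (cI G) A) :
  linear_in_slot n F ->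
  linear_in_slot n (curm (compm (Dop f) (pairm (compm F (pi1 (cI G) A)) (pi2 (cI G) A)))).
Proof.
move=> lin_F X g v; rewrite (D_curry ax) !curm_comp; congr curm.
rewrite !(CD5 ax) (CD4 ax) (CD5 ax) (CD3_pi1 ax) (CD3_pi2 ax); slot_simpl.
rewrite (CD6 ax).
by have := lin_F _ (compm g (pi1 _ _)) (compm v (pi1 X A)); slot_simpl => ->.
Qed.

Lemma linear_in_top_slot_dlinear xs G B (F : Hom (cI (xs :: G)) B) :
  linear_in_slot 0 F ->
  forall g : Hom unitobj (cI G), dlinear (compm F (pairm (compm g (bang _)) (idm _))).
Proof.
move=> lin_F g; rewrite /dlinear (CD5 ax) (CD4 ax) Dop_const (CD3_id ax).
have := lin_F _ (pairm (compm g (bang _)) (pi2 (tI xs.2) (tI xs.2))) (pi1 (tI xs.2) (tI xs.2)).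
by rewrite !set_slot0; slot_simpl => ->; slot_simpl.
Qed.

Definition var_at G n : nat := (nth (0%N, TR) G n).1.

(* Slot [n] is not shadowed by a more recent binding of the same variable. *)
Definition visible G n : bool := index (var_at G n) (unzip1 G) == n.

Lemma var_atS x s G n : var_at ((x, s) :: G) n.+1 = var_at G n.
Proof. by []. Qed.

Lemma visible_top x s G : visible ((x, s) :: G) 0.
Proof. by rewrite /visible /var_at /= eqxx. Qed.

Lemma visibleS x s G n : visible ((x, s) :: G) n.+1 = (x != var_at G n) && visible G n.
Proof. by rewrite /visible /var_at /=; case: ifP. Qed.

Lemma not_free_under_binder x s G n (b : nat -> bool) :
  ~~ (visible G n && ((var_at G n != x) && b (var_at G n))) ->
  ~~ (visible ((x, s) :: G) n.+1 && b (var_at G n)).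
Proof. by rewrite visibleS eq_sym andbA [_ && (_ != _)]andbC. Qed.

Lemma lin_s_unique G (S : sterm R Fsym) t (d : styped fin fout G S t) a b :
  lin_s S a -> lin_s S b -> a = b.
Proof.
move: G S t d a b; apply: (@styped_mut_ind R Fsym fin fout
  (fun G S t _ => forall a b, lin_s S a -> lin_s S b -> a = b) (fun _ _ _ _ => True)) => //=.
- by move=> G x s a b /eqP -> /eqP ->.
- by move=> G x s t b _ IH a c /andP[_ ha] /andP[_ hc]; exact: IH.
- by move=> G f p s t _ IH _ _ a b /andP[ha _] /andP[hb _]; exact: IH.
- by move=> G u v s t _ IH _ _ a b /andP[ha _] /andP[hb _]; exact: IH.
- move=> G x u v s t _ IHu _ IHv lin_x a b.
  have lin_v c : ((c != x) && lin_s u c && ~~ fv_s v c) || (lin_s v c && ~~ fv_s u c) ->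
      lin_s v c.
    by case/orP=> [/andP[/andP[/eqP c_x /IHu /(_ lin_x)]] //|/andP[]].
  by move=> /lin_v ha /lin_v hb; exact: IHv.
Qed.

Lemma sI_omega G x (p : pterm R Fsym) u s t (dp : ptyped fin fout ((x, s) :: G) p t)
    (du : styped fin fout G u (TOmega t)) :
  sI RS (TyOmega dp du) = omega_mor (pI RS dp) (sI RS du).
Proof. by []. Qed.

Lemma constant_in_slot_sI G (S : sterm R Fsym) t (d : styped fin fout G S t) n :
  ~~ (visible G n && fv_s S (var_at G n)) -> constant_in_slot n (sI RS d).
Proof.
move: G S t d n; apply: (@styped_mut_ind R Fsym fin fout
  (fun G S t d => forall n,
     ~~ (visible G n && fv_s S (var_at G n)) -> constant_in_slot n (sI RS d))
  (fun G P t d => forall n,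
     ~~ (visible G n && fv_p P (var_at G n)) -> constant_in_slot n (pI RS d))).
- move=> G x s [|n] /=; last by move=> _; exact: constant_in_slot_top_var.
  by rewrite visible_top /var_at /= eqxx.
- move=> G x y s t x_y d IH [|n] fresh; first exact: constant_in_top_slot_weaken.
  apply: constant_in_slot_weaken; apply: IH; move: fresh; rewrite visibleS /=.
  by case: (eqVneq (var_at G n) x) => [->|]; rewrite ?andbF // eq_sym x_y andbT.
- move=> G x s t b db IH n /= fresh; apply: (constant_in_slot_curm (xs := (x, s))).
  exact/IH/not_free_under_binder.
- move=> G f p s t df IHf dp IHp n /=; rewrite andb_orr negb_or => /andP[fresh_f fresh_p].
  by apply/constant_in_slot_comp/constant_in_slot_pair; [exact: IHf | exact: IHp].
- by move=> G u s t du IH n /= fresh; exact/constant_in_slot_comp/IH.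
- by move=> G u s t du IH n /= fresh; exact/constant_in_slot_comp/IH.
- move=> G u v s t du IHu dv IHv n /=; rewrite andb_orr negb_or => /andP[fresh_u fresh_v].
  by apply: constant_in_slot_pair; [exact: IHu | exact: IHv].
- by move=> G r n _; exact: constant_in_slot_const.
- by move=> G f p dp IH n /= fresh; exact/constant_in_slot_comp/IH.
- move=> G f u du IH n /= fresh; apply: (constant_in_slot_curm (xs := (0%N, Rpow (fin f)))).
  apply/constant_in_slot_comp/constant_in_slot_pair; last exact: constant_in_slot_top_var.
  exact/constant_in_slot_weaken/IH.
- move=> G k r size_r n _; apply: (constant_in_slot_curm (xs := (0%N, Rpow k))).
  exact/constant_in_slot_comp/constant_in_slot_top_var.
- move=> G x u v s t du IHu dv IHv lin_x n /=; rewrite andb_orr negb_or => /andP[fresh_u fresh_v].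
  apply/(constant_in_slot_curm (xs := (x, s)))/constant_in_slot_comp/constant_in_slot_pair.
    exact/constant_in_slot_weaken/IHv.
  exact/IHu/not_free_under_binder.
- move=> G x p u s t dp IHp du IHu n; rewrite sI_omega /= andb_orr negb_or.
  move=> /andP[fresh_p fresh_u].
  apply: (constant_in_slot_omega_mor (xs := (x, s))); first exact: IHu.
  exact/IHp/not_free_under_binder.
- by move=> G s n _; exact: constant_in_slot_zero.
- by move=> G u s du IH n /= fresh; exact: IH.
- move=> G u p s du IHu dp IHp n /=; rewrite andb_orr negb_or => /andP[fresh_u fresh_p].
  by apply: constant_in_slot_add; [exact: IHu | exact: IHp].
Qed.

Lemma constant_in_slot_pI G (P : pterm R Fsym) t (d : ptyped fin fout G P t) n :
  ~~ (visible G n && fv_p P (var_at G n)) -> constant_in_slot n (pI RS d).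
Proof.
elim: d n => {G P t} [G s|G u s du|G u p s du dp IH] n /=.
- by move=> _; exact: constant_in_slot_zero.
- exact: constant_in_slot_sI.
- rewrite andb_orr negb_or => /andP[fresh_u fresh_p].
  by apply: constant_in_slot_add; [exact: constant_in_slot_sI | exact: IH].
Qed.

Lemma linear_in_slot_sI G (S : sterm R Fsym) t (d : styped fin fout G S t) n :
  visible G n -> lin_s S (var_at G n) -> linear_in_slot n (sI RS d).
Proof.
move: G S t d n; apply: (@styped_mut_ind R Fsym fin fout
  (fun G S t d => forall n,
     visible G n -> lin_s S (var_at G n) -> linear_in_slot n (sI RS d))
  (fun _ _ _ _ => True)) => //.
- move=> G x s [|n]; first by move=> _ _; exact: linear_in_top_slot_var.
  by rewrite visibleS var_atS => /andP[x_z _] /eqP z_x; rewrite z_x eqxx in x_z.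
- move=> G x y s t x_y d IH [|n].
    by move=> _; rewrite /var_at /= => /eqP y_x; exfalso; rewrite y_x eqxx in x_y.
  rewrite visibleS => /andP[_ vis] lin; apply/linear_in_slot_weaken/IH => //.
- move=> G x s t b db IH n vis /= /andP[z_x lin].
  apply: (linear_in_slot_curm (xs := (x, s))); apply: IH => //.
  by rewrite visibleS eq_sym z_x.
- move=> G f p s t df IH dp _ n vis /= /andP[lin fresh].
  apply: linear_in_slot_app; first exact: IH.
  by apply: constant_in_slot_pI; rewrite (negbTE fresh) andbF.
- by move=> G u s t du IH n vis /= lin; exact/linear_in_slot_pi1/IH.
- by move=> G u s t du IH n vis /= lin; exact/linear_in_slot_pi2/IH.
- move=> G u v s t du IHu dv IHv n vis /= /andP[lin_u lin_v].
  by apply: linear_in_slot_pair; [exact: IHu | exact: IHv].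
- by move=> G f u du IH n vis /= lin; exact/linear_in_slot_jacobian/IH.
- move=> G x u v s t du IHu dv IHv lin_x n vis /=.
  (* The first disjunct is vacuous, since [u] is already linear in [x]. *)
  case/orP=> [/andP[/andP[/eqP z_x lin_u] _]|/andP[lin_v fresh_u]].
    by case: z_x; exact: (lin_s_unique du lin_u lin_x).
  apply/(linear_in_slot_curm (xs := (x, s)))/linear_in_slot_app.
    exact/linear_in_slot_weaken/IHv.
  by apply: constant_in_slot_sI; rewrite (negbTE fresh_u) andbF.
Qed.

Lemma linear_in_slot_pI G (P : pterm R Fsym) t (d : ptyped fin fout G P t) n :
  visible G n -> lin_p P (var_at G n) -> linear_in_slot n (pI RS d).
Proof. by case: d => {G P t} [//|G u s du|//]; exact: linear_in_slot_sI. Qed.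

Lemma good_Rpow k (a : Hom unitobj (tI (Rpow k))) : good RS (Rpow k) a.
Proof. by elim: k a => [|k IH] a //=; split. Qed.

Lemma good_zero t : good RS t (zerom _ _).
Proof.
elim: t => [|s IHs u IHu|s IHs u IHu|s IHs] //=.
- by rewrite pi1_zero pi2_zero.
- by move=> b _; rewrite evm_zerol.
- by rewrite mor_of_pt_zero; exact: dlinear_zero.
Qed.

Lemma good_add t a b : good RS t a -> good RS t b -> good RS t (addm a b).
Proof.
elim: t a b => [|s IHs u IHu|s IHs u IHu|s IHs] a b //=.
- move=> [a1 a2] [b1 b2]; rewrite (pi1_additive ax _ _).1 (pi2_additive ax _ _).1.
  by split; [exact: IHs | exact: IHu].
- by move=> ga gb c gc; rewrite evm_addl; apply: IHu; [exact: ga | exact: gb].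
- by rewrite mor_of_pt_add; exact: dlinear_add.
Qed.

Hypothesis dualc_dlinear : forall k r, size r = k.+1 -> dlinear (dualc RS k r).

Lemma good_sI G (S : sterm R Fsym) t (d : styped fin fout G S t) g :
  ctx_good RS G g -> good RS t (compm (sI RS d) g).
Proof.
move: G S t d g; apply: (@styped_mut_ind R Fsym fin fout
  (fun G S t d => forall g, ctx_good RS G g -> good RS t (compm (sI RS d) g))
  (fun G P t d => forall g, ctx_good RS G g -> good RS t (compm (pI RS d) g))).
- by move=> G x s g [].
- by move=> G x y s t x_y d IH g [good_g _] /=; rewrite compmA; exact: IH.
- move=> G x s t b db IH g good_g /= c good_c; rewrite evm_curm; apply: IH.
  by rewrite /= (pi1_pair ax) (pi2_pair ax).
- move=> G f p s t df IHf dp IHp g good_g /=; rewrite compmA pairm_comp.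
  by apply: (IHf g good_g); exact: IHp.
- by move=> G u s t du IH g good_g /=; rewrite compmA; exact: (IH g good_g).1.
- by move=> G u s t du IH g good_g /=; rewrite compmA; exact: (IH g good_g).2.
- move=> G u v s t du IHu dv IHv g good_g /=; rewrite pairm_comp (pi1_pair ax) (pi2_pair ax).
  by split; [exact: IHu | exact: IHv].
- by [].
- by move=> *; exact: good_Rpow.
- by move=> G f u du IH g good_g b _; exact: good_Rpow.
- move=> G k r size_r g good_g /=.
  by rewrite mor_of_pt_curm; cat_simpl; exact: dualc_dlinear.
- move=> G x u v s t du IHu dv IHv lin_x g good_g /=.
  rewrite mor_of_pt_pullback; apply: dlinear_comp; first exact: IHv.
  apply: (linear_in_top_slot_dlinear (xs := (x, s))).
  by apply: linear_in_slot_sI; rewrite ?visible_top.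
- move=> G x p u s t dp IHp du IHu g good_g b good_b.
  rewrite sI_omega /= mor_of_pt_omega_mor; apply: dlinear_comp; last exact: dlinear_partial_Dop.
  by apply: IHu => //; apply: IHp; rewrite /= (pi1_pair ax) (pi2_pair ax).
- by move=> G s g _ /=; rewrite (zero_comp ax); exact: good_zero.
- by move=> G u s du IH g good_g /=; exact: IH.
- move=> G u p s du IHu dp IHp g good_g /=; rewrite (add_comp ax).
  by apply: good_add; [exact: IHu | exact: IHp].
Qed.

Lemma good_pI G (P : pterm R Fsym) t (d : ptyped fin fout G P t) g :
  ctx_good RS G g -> good RS t (compm (pI RS d) g).
Proof.
elim: d g => {G P t} [G s|G u s du|G u p s du dp IH] g good_g /=.
- by rewrite (zero_comp ax); exact: good_zero.
- exact: good_sI.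
- by rewrite (add_comp ax); apply: good_add; [exact: good_sI | exact: IH].
Qed.

End Interpretation.
End DifferentialLambdaCategory.

Theorem lemma4p1 (R : realType) (C : lcat) (Fsym : Type) (fin fout : Fsym -> nat)
    (RS : realstr R C fin fout) :
  dlc_axioms C -> realstr_ok RS -> hahn_banach RS ->
  (forall (G : ctx) (x : nat) (s1 t : ty) (P1 : pterm R Fsym)
          (d : ptyped fin fout ((x, s1) :: G) P1 t) (g : Hom unitobj (ctxI RS G)),
     lin_p P1 x -> ctx_good RS G g ->
     dlinear (mor_of_pt (compm (curm (pI RS d)) g)))
  /\
  (forall (G : ctx) (s : ty) (P2 : pterm R Fsym)
          (d : ptyped fin fout G P2 (TDual s)) (g : Hom unitobj (ctxI RS G)),
     ctx_good RS G g ->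
     dlinear (mor_of_pt (compm (pI RS d) g))).
Proof.
move=> ax [_ [_ [_ [dualc_dlinear _]]]] _; split.
- move=> G x s1 t P1 d g lin_x _; rewrite (mor_of_pt_curm ax).
  apply: (linear_in_top_slot_dlinear ax (xs := (x, s1))).
  by apply: linear_in_slot_pI; rewrite ?visible_top.
- by move=> G s P2 d g good_g; exact: (good_pI ax dualc_dlinear d good_g).
Qed.
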